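(* Let $X$ be a $d$-uniform $\{\lambda_i\}$-two-sided local-spectral expander with all $\lambda_i>0$. Then for every $k<d$, the degree of the $k$-skeleton of $X$ satisfies \[\deg^{(k)}(X)\ge\frac{1}{(k-1)!}\prod_{i=1}^{k-1}\frac{1}{\lambda_i}.\]
   Context: $X$ is a $d$-uniform simplicial complex ($X(j)$ its faces of size $j$) with a full-support distribution on $X(d)$; links $X_t=\{s\setminus t:t\subseteq s\in X\}$ carry the induced distribution, and the graph underlying $X_t$ has vertices $X_t(1)$ and weighted edges $X_t(2)$. A weighted graph is a $\lambda$-two-sided expander if all nontrivial eigenvalues of its normalized adjacency operator lie in $[-\lambda,\lambda]$. $X$ is a $\{\lambda_i\}$-two-sided local-spectral expander if for every $i\le d-2$ and every $t\in X(i)$ the graph underlying $X_t$ is a $\lambda_i$-two-sided expander. The $k$-th degree is $\deg^{(k)}(X)=\max_{v\in X(1)}|\{s\in X(k):v\in s\}|$. *)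

From HB Require Import structures.
From mathcomp Require Import all_boot all_order all_algebra.
From mathcomp Require Import reals.
Set Implicit Arguments. Unset Strict Implicit. Unset Printing Implicit Defensive.
Import Order.TTheory GRing.Theory Num.Theory.
Local Open Scope ring_scope.

Section SimplicialDefs.
Variable V : finType.

Definition is_complex (X : {set {set V}}) : Prop :=
  forall s t : {set V}, s \in X -> t \subset s -> t \in X.

Definition d_uniform (X : {set {set V}}) (d : nat) : Prop :=
  (forall s, s \in X -> (#|s| <= d)%N) /\
  (forall s, s \in X -> exists2 f, f \in X & (s \subset f) && (#|f| == d)).

Variable R : realType.

Definition full_support_distr (X : {set {set V}}) (d : nat) (p : {set V} -> R)
  : Prop :=
  (forall s, s \in X -> #|s| = d -> 0 < p s) /\
  \sum_(s in X | #|s| == d) p s = 1.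

(* total weight of top faces containing s (proportional to the induced
   probability of s) *)
Definition face_weight (X : {set {set V}}) (d : nat) (p : {set V} -> R)
  (s : {set V}) : R :=
  \sum_(f in X | (#|f| == d) && (s \subset f)) p f.

Definition link_verts (X : {set {set V}}) (t : {set V}) : {set V} :=
  [set v | (v \notin t) && ((v |: t) \in X)].

(* edge weight of {u,v} in the graph underlying X_t (up to a constant factor,
   which does not affect the normalized adjacency operator) *)
Definition link_adj (X : {set {set V}}) d p (t : {set V}) (u v : V) : R :=
  if u == v then 0 else face_weight X d p ([set u; v] :|: t).

Definition link_deg (X : {set {set V}}) d p (t : {set V}) (u : V) : R :=
  \sum_(v in link_verts X t) link_adj X d p t u v.

(* normalized adjacency operator D^{-1} A of the graph underlying X_t,
   with rows/columns indexed by an enumeration of X_t(1) *)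
Definition link_walk (X : {set {set V}}) d p (t : {set V}) :
  'M[R]_#|link_verts X t| :=
  \matrix_(i, j) (link_adj X d p t (enum_val i) (enum_val j) /
                  link_deg X d p t (enum_val i)).

End SimplicialDefs.

(* lambda-two-sided expander: the eigenvalues other than (one copy of) the
   trivial eigenvalue 1 lie in [-lam, lam]. *)
Definition two_sided_expander (R : realType) (n : nat) (M : 'M[R]_n) (lam : R)
  : Prop :=
  exists2 q : {poly R}, char_poly M = ('X - 1%:P) * q &
    forall x : R, root q x -> - lam <= x <= lam.

Definition local_spectral_expander (V : finType) (R : realType)
  (X : {set {set V}}) (d : nat) (p : {set V} -> R) (lam : nat -> R) : Prop :=
  forall (i : nat) (t : {set V}), (i.+2 <= d)%N -> t \in X -> #|t| = i ->
    two_sided_expander (link_walk X d p t) (lam i).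

Definition kdeg (V : finType) (X : {set {set V}}) (k : nat) : nat :=
  \max_(v : V | [set v] \in X) #|[set s in X | (#|s| == k) && (v \in s)]|.

From HB Require Import structures.
From mathcomp Require Import all_boot all_order all_algebra.
From mathcomp Require Import reals complex lra.
Set Implicit Arguments.
Unset Strict Implicit.
Unset Printing Implicit Defensive.
Import Order.TTheory GRing.Theory Num.Theory.
Local Open Scope ring_scope.

(* Fix a vertex v and let F_j be the set of j-faces through v.  In the link of
   a face t of size i the normalized adjacency operator has zero trace (the
   graph has no loops), real spectrum (it is self-adjoint for the
   degree-weighted inner product), the trivial eigenvalue 1, and all other
   eigenvalues at least -lam_i; summing them gives 1 <= (n - 1) lam_i, so the
   link has at least 1/lam_i vertices.  Counting pairs (s, u) with s in F_j and
   u a vertex of the link of s, i.e. pairs (u |: s, u), gives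
   j #F_(j+1) >= #F_j / lam_j, and induction from F_1 = {{v}} yields the
   bound. *)

Definition normalized_mx {F : fieldType} {n} (a : 'I_n -> 'I_n -> F)
    (dg : 'I_n -> F) : 'M[F]_n :=
  \matrix_(i, j) (a i j / dg i).

Section NormalizedMatrixEigenvalues.
Variables (C : numClosedFieldType) (n : nat).
Variables (a : 'I_n -> 'I_n -> C) (dg : 'I_n -> C).
Hypothesis a_sym : forall i j, a i j = a j i.
Hypothesis a_real : forall i j, a i j \is Num.real.
Hypothesis dg_ge0 : forall i, 0 <= dg i.

Lemma symmetric_form_real (w : 'I_n -> C) :
  \sum_j (\sum_i w i * a i j) * (w j)^* \is Num.real.
Proof.
apply/CrealP; rewrite rmorph_sum /=.
under eq_bigr => j _ do rewrite rmorphM rmorph_sum /= conjCK mulr_suml.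
rewrite exchange_big /=; apply: eq_bigr => i _; rewrite mulr_suml.
apply: eq_bigr => j _; rewrite rmorphM /= (conj_Creal (a_real _ _)) a_sym.
by rewrite mulrAC [RHS]mulrC -mulrA.
Qed.

(* With [w := v / dg] the eigen-equation reads [w A = z v], so [z] is the
   quotient of the real form [w A w^*] by [\sum_j |v_j|^2 / dg_j >= 0].  If
   that sum vanishes then [w = 0] (using [x / 0 = 0] where [dg j = 0]), hence
   [z v = 0]. *)
Lemma eigenvalue_normalized_mx_real z :
  eigenvalue (normalized_mx a dg) z -> z \is Num.real.
Proof.
move=> /eigenvalueP[v ev v_neq0].
pose w i := v 0 i / dg i.
have ev_j j : \sum_i w i * a i j = z * v 0 j.
  have := congr1 (fun m : 'rV_n => m 0 j) ev; rewrite !mxE => <-.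
  by apply: eq_bigr => i _; rewrite mxE mulrA mulrAC.
pose S := \sum_j v 0 j * (w j)^*.
have S_term j : v 0 j * (w j)^* = v 0 j * (v 0 j)^* * (dg j)^-1.
  have dgV_real : (dg j)^-1 \is Num.real by rewrite rpredV ger0_real.
  by rewrite /w rmorphM /= (conj_Creal dgV_real) mulrA.
have S_term_ge0 j : 0 <= v 0 j * (w j)^*.
  by rewrite S_term mulr_ge0 ?mul_conjC_ge0 ?invr_ge0.
have [S0|S_neq0] := eqVneq S 0; last first.
  have HS : \sum_j (\sum_i w i * a i j) * (w j)^* = z * S.
    by rewrite mulr_sumr; apply: eq_bigr => j _; rewrite ev_j mulrA.
  have -> : z = (z * S) / S by rewrite mulfK.
  by rewrite -HS rpredM ?symmetric_form_real // rpredV ger0_real ?sumr_ge0.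
have w0 j : w j = 0.
  have := psumr_eq0P (fun j _ => S_term_ge0 j) S0 (i:=j) isT.
  rewrite S_term => /eqP; rewrite mulf_eq0 mul_conjC_eq0.
  by case/orP=> /eqP h; rewrite /w ?h ?mul0r ?mulr0.
have /existsP[j vj] : [exists j, v 0 j != 0].
  apply: contraNT v_neq0; rewrite negb_exists => /forallP v0.
  by apply/eqP/rowP => j; rewrite mxE; apply/eqP/negPn/v0.
have := ev_j j; rewrite big1 => [/esym/eqP|i _]; last by rewrite w0 mul0r.
by rewrite mulf_eq0 (negbTE vj) orbF => /eqP ->; rewrite real0.
Qed.

End NormalizedMatrixEigenvalues.

Lemma monic_real_roots_prod_XsubC (R : rcfType) (q : {poly R}) :
  q \is monic ->
  (forall z, root (map_poly (real_complex R) q) z -> z \is Num.real) ->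
  exists s : seq R, q = \prod_(x <- s) ('X - x%:P).
Proof.
move=> q_monic q_real.
have [r qE] := closed_field_poly_normal (map_poly (real_complex R) q).
rewrite lead_coef_map /= (monicP q_monic) rmorph1 scale1r in qE.
exists (map (@complex.Re R) r); apply: (@map_poly_inj _ _ (real_complex R)).
rewrite map_prod_XsubC big_map qE; apply: eq_big_seq => z z_r.
by rewrite /= RRe_real // q_real // qE root_prod_XsubC.
Qed.

Lemma char_poly_prod_XsubC_trace (R : comNzRingType) n (M : 'M[R]_n) s :
  char_poly M = \prod_(x <- s) ('X - x%:P) -> \tr M = \sum_(x <- s) x.
Proof.
move=> chiE; have := size_char_poly M; rewrite chiE size_prod_XsubC => -[].
case: n M chiE => [M _ s0|n M chiE sz].
  by case: s s0 => // _; rewrite /mxtrace big_ord0 big_nil.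
apply: oppr_inj; rewrite -char_poly_trace // chiE -sz -coefPn_prod_XsubC //.
by rewrite sz.
Qed.

Lemma two_sided_expander_trace0 (R : realType) n (M : 'M[R]_n) lam :
  \tr M = 0 ->
  (forall z, eigenvalue (map_mx (real_complex R) M) z -> z \is Num.real) ->
  two_sided_expander M lam -> 1 <= (n.-1)%:R * lam.
Proof.
move=> tr0 M_real [q chiE q_roots].
have q_monic : q \is monic.
  by have := char_poly_monic M; rewrite chiE monicMl // monicXsubC.
have [s qE] : exists s : seq R, q = \prod_(x <- s) ('X - x%:P).
  apply: monic_real_roots_prod_XsubC => // z qz; apply: M_real.
  by rewrite eigenvalue_root_char -map_char_poly chiE rmorphM rootM qz orbT.
have chi_prod : char_poly M = \prod_(x <- 1 :: s) ('X - x%:P).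
  by rewrite big_cons chiE qE.
have := char_poly_prod_XsubC_trace chi_prod; rewrite tr0 big_cons => sum_s.
have -> : n.-1 = size s.
  by have := size_char_poly M; rewrite chi_prod size_prod_XsubC => -[<-].
have : 0 <= \sum_(x <- s) (x + lam).
  rewrite big_seq; apply: sumr_ge0 => x xs.
  have /q_roots/andP[lam_x _] : root q x by rewrite qE root_prod_XsubC.
  by rewrite -lerBlDr sub0r.
rewrite big_split /= big_const_seq count_predT iter_addr_0 -mulr_natr.
lra.
Qed.

Section LinkSpectralBound.
Variables (V : finType) (R : realType) (X : {set {set V}}) (d : nat).
Variable p : {set V} -> R.
Hypothesis p_pos : forall s, s \in X -> #|s| = d -> 0 < p s.

Lemma link_adj_ge0 t u w : 0 <= link_adj X d p t u w.
Proof.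
rewrite /link_adj; case: eqP => // _.
by apply: sumr_ge0 => f /andP[fX /andP[/eqP f_card _]]; apply/ltW/p_pos.
Qed.

Lemma card_link_verts_ge t lam :
  0 < lam -> two_sided_expander (link_walk X d p t) lam ->
  lam^-1 <= #|link_verts X t|%:R.
Proof.
move=> lam_gt0 expander.
pose a (i j : 'I_#|link_verts X t|) :=
  link_adj X d p t (enum_val i) (enum_val j).
pose dg (i : 'I_#|link_verts X t|) := link_deg X d p t (enum_val i).
have a_sym i j : a i j = a j i.
  by rewrite /a /link_adj eq_sym (setUC [set enum_val i]); case: eqP.
have dg_ge0 i : 0 <= dg i by apply: sumr_ge0 => w _; apply: link_adj_ge0.
have tr0 : \tr (normalized_mx a dg) = 0.
  by rewrite /mxtrace big1 // => i _; rewrite mxE /a /link_adj eqxx mul0r.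
have eig_real z : eigenvalue (map_mx (real_complex R) (normalized_mx a dg)) z ->
    z \is Num.real.
  have -> : map_mx (real_complex R) (normalized_mx a dg) =
      normalized_mx (fun i j => (a i j)%:C%C) (fun i => (dg i)%:C%C).
    by apply/matrixP => i j; rewrite !mxE rmorphM /= fmorphV.
  apply: eigenvalue_normalized_mx_real => [i j|i j|i].
  - by rewrite a_sym.
  - by apply/complex_realP; exists (a i j).
  - by rewrite ler0c.
have := two_sided_expander_trace0 tr0 eig_real expander.
rewrite -ler_pdivrMr // div1r => /le_trans; apply.
by rewrite ler_nat leq_pred.
Qed.

End LinkSpectralBound.

Lemma sum_card_exchange (S U : finType) (A : {set S}) (B : S -> {set U}) :
  (\sum_(s in A) #|B s| = \sum_u #|[set s in A | u \in B s]|)%N.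
Proof.
under eq_bigr do rewrite -sum1_card.
rewrite (exchange_big_dep predT) //; apply: eq_bigr => u _.
by rewrite -sum1_card; apply: eq_bigl => s; rewrite inE.
Qed.

Definition faces_through (V : finType) (X : {set {set V}}) (v : V) (j : nat) :=
  [set s in X | (#|s| == j) && (v \in s)].

Section LinkCounting.
Variables (V : finType) (X : {set {set V}}).
Hypothesis X_complex : is_complex X.

Lemma faces_through_extend (v u : V) j :
  [set s in faces_through X v j.+1 | u \in s :\ v] =
  [set u |: s | s in [set s in faces_through X v j | u \in link_verts X s]].
Proof.
apply/setP => s'; rewrite !inE; apply/idP/imsetP.
  move=> /andP[/andP[s'X /andP[/eqP s's vs']] /andP[uv us']].
  exists (s' :\ u); last by rewrite setD1K.
  have s'uX : s' :\ u \in X := X_complex s'X (subsetDl _ _).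
  have := cardsD1 u s'; rewrite us' s's add1n => -[s'u].
  by rewrite !inE s'uX s'u eqxx (eq_sym v) uv vs' eqxx setD1K.
move=> [s]; rewrite !inE => /andP[/andP[sX /andP[/eqP ss vs]] /andP[us usX]] ->.
rewrite usX cardsU1 us ss eqxx setU1r //= setU11 andbT.
by apply: contraNneq us => ->.
Qed.

Lemma sum_card_link_verts (v : V) j :
  (\sum_(s in faces_through X v j) #|link_verts X s| =
   j * #|faces_through X v j.+1|)%N.
Proof.
have card_sv s : s \in faces_through X v j.+1 -> #|s :\ v| = j.
  by rewrite !inE => /andP[_ /andP[/eqP s_card vs]]; have := cardsD1 v s;
     rewrite vs s_card add1n => -[].
rewrite mulnC -sum_nat_const -(eq_bigr _ card_sv) !sum_card_exchange.
apply: eq_bigr => u _; rewrite faces_through_extend card_in_imset //.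
move=> s1 s2; rewrite !inE => /andP[_ /andP[us1 _]] /andP[_ /andP[us2 _]] e.
by rewrite -(setU1K us1) e setU1K.
Qed.

End LinkCounting.

Section FacesThroughVertex.
Variables (V : finType) (R : realType) (X : {set {set V}}) (d : nat).
Variables (p : {set V} -> R) (lam : nat -> R).
Hypothesis X_complex : is_complex X.
Hypothesis p_distr : full_support_distr X d p.
Hypothesis X_expander : local_spectral_expander X d p lam.
Hypothesis lam_gt0 : forall i, (i.+2 <= d)%N -> 0 < lam i.

Lemma card_faces_through_succ v j : (j.+2 <= d)%N ->
  #|faces_through X v j|%:R * (lam j)^-1 <= (j * #|faces_through X v j.+1|)%:R.
Proof.
move=> jd; rewrite -sum_card_link_verts // natr_sum mulr_natl -sumr_const.
apply: ler_sum => s; rewrite !inE => /andP[sX /andP[/eqP s_card _]].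
exact: card_link_verts_ge p_distr.1 _ _ (lam_gt0 jd) (X_expander jd sX s_card).
Qed.

Lemma card_faces_through_ge v j : [set v] \in X -> (0 < j)%N -> (j < d)%N ->
  ((j.-1)`!%:R)^-1 * \prod_(1 <= i < j) (lam i)^-1 <= #|faces_through X v j|%:R.
Proof.
move=> vX; elim: j => // -[_ _ _|j IH _ jd].
  rewrite big_geq // fact0 invr1 mul1r ler1n card_gt0; apply/set0Pn.
  by exists [set v]; rewrite !inE vX cards1 !eqxx.
have lam_j := lam_gt0 jd.
rewrite big_nat_recr //= factS natrM invfM -mulrA.
pose F : R := #|faces_through X v j.+1|%:R.
apply: (@le_trans _ _ (j.+1%:R^-1 * (F * (lam j.+1)^-1))).
  rewrite ler_pM2l ?invr_gt0 ?ltr0Sn // mulrA ler_pM2r ?invr_gt0 //.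
  exact: IH (ltnW jd).
by rewrite ler_pdivrMl ?ltr0Sn // -natrM card_faces_through_succ.
Qed.

End FacesThroughVertex.

Lemma exists_vertex (V : finType) (R : realType) (X : {set {set V}}) d
    (p : {set V} -> R) :
  is_complex X -> full_support_distr X d p -> (0 < d)%N ->
  exists v, [set v] \in X.
Proof.
move=> X_complex [_ p_sum] d_gt0.
have [f /andP[fX /eqP f_card] | no_top] :=
  pickP [pred f | (f \in X) && (#|f| == d)]; last first.
  by move: p_sum; rewrite big_pred0 // => /eqP; rewrite eq_sym oner_eq0.
have [v vf] : exists v, v \in f by apply/set0Pn; rewrite -card_gt0 f_card.
by exists v; apply: X_complex fX _; rewrite sub1set.
Qed.

Theorem mainTheorem15 (V : finType) (R : realType) (X : {set {set V}})
  (d : nat) (p : {set V} -> R) (lam : nat -> R) :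
  is_complex X -> d_uniform X d -> full_support_distr X d p ->
  local_spectral_expander X d p lam ->
  (forall i, (i.+2 <= d)%N -> 0 < lam i) ->
  forall k : nat, (1 <= k)%N -> (k < d)%N ->
    (kdeg X k)%:R >= ((k.-1)`!%:R)^-1 * \prod_(1 <= i < k) (lam i)^-1.
Proof.
move=> X_complex _ p_distr X_expander lam_gt0 k k_gt0 kd.
have [v vX] := exists_vertex X_complex p_distr (ltn_trans k_gt0 kd).
apply: le_trans (card_faces_through_ge X_complex p_distr X_expander lam_gt0
  vX k_gt0 kd) _.
rewrite ler_nat.
exact: (leq_bigmax_cond (F := fun v => #|faces_through X v k|) v vX).
Qed.
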